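(* Let $\alpha_1,\dots,\alpha_k$ be nonnegative reals with $\sum_{i=1}^k\alpha_i=1$ and let $\frac13\le\theta\le1$. For $I\subset\{1,\dots,k\}$ write $\alpha_I=\sum_{i\in I}\alpha_i$. Consider the statements: ($I$) $\alpha_i\ge1-\theta$ for some $i$; ($I_2^{\mathrm{maj}}$) $\alpha_{\{i,j\}}\ge1-\theta$ for some $1\le i<j\le k$; ($I_2$) $\alpha_{\{i,j\}}\ge\frac32(1-\theta)$ for some $1\le i<j\le k$; ($II^{\mathrm{maj}}$) there is a partition $\{1,\dots,k\}=I\uplus J\uplus J'$ with $2\theta-1\le\alpha_I\le4\theta-2$ and $|\alpha_J-\alpha_{J'}|\le2\theta-1$; ($II^{\mathrm{min}}$) there is a partition $\{1,\dots,k\}=J\uplus J'$ with $|\alpha_J-\alpha_{J'}|\le2\theta-1$. Then: (i) if $\theta=5/8$, at least one of ($I$), ($II^{\mathrm{maj}}$) holds; (ii) if $\theta\ge3/5$, at least one of ($I$), ($I_2$), ($II^{\mathrm{min}}$) holds; (iii) if $\theta=7/12$, at least one of ($I$), ($I_2^{\mathrm{maj}}$), ($II^{\mathrm{maj}}$) holds; (iv) if $k=5$ and $\theta=11/20$, at least one of ($I_2^{\mathrm{maj}}$), ($II^{\mathrm{maj}}$) holds; (v) if $k\in\{3,4\}$ and $\theta\ge1/2$, then ($I_2^{\mathrm{maj}}$) holds; (vi) if $k=3$ and $\theta\ge5/9$, or $k=2$ and $\theta\ge1/3$, then ($I_2$) holds. *)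

From mathcomp Require Import all_boot all_order all_algebra.
Set Implicit Arguments. Unset Strict Implicit. Unset Printing Implicit Defensive.
Import Order.TTheory GRing.Theory Num.Theory.
Local Open Scope ring_scope.

Definition alphaS (R : realFieldType) (k : nat) (alpha : 'I_k -> R)
  (I : {set 'I_k}) : R := \sum_(i in I) alpha i.

Definition condI (R : realFieldType) (k : nat) (alpha : 'I_k -> R) (theta : R) : Prop :=
  exists i : 'I_k, 1 - theta <= alpha i.

Definition condI2maj (R : realFieldType) (k : nat) (alpha : 'I_k -> R) (theta : R) : Prop :=
  exists i j : 'I_k, (i < j)%N /\ 1 - theta <= alphaS alpha [set i; j].

Definition condI2 (R : realFieldType) (k : nat) (alpha : 'I_k -> R) (theta : R) : Prop :=
  exists i j : 'I_k, (i < j)%N /\ (3%:R / 2%:R) * (1 - theta) <= alphaS alpha [set i; j].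

Definition condIImaj (R : realFieldType) (k : nat) (alpha : 'I_k -> R) (theta : R) : Prop :=
  exists I J J' : {set 'I_k},
    [/\ [disjoint I & J], [disjoint I & J'], [disjoint J & J'] & I :|: J :|: J' = setT] /\
    2%:R * theta - 1 <= alphaS alpha I /\ alphaS alpha I <= 4%:R * theta - 2%:R /\
    `|alphaS alpha J - alphaS alpha J'| <= 2%:R * theta - 1.

Definition condIImin (R : realFieldType) (k : nat) (alpha : 'I_k -> R) (theta : R) : Prop :=
  exists J J' : {set 'I_k},
    [disjoint J & J'] /\ J :|: J' = setT /\
    `|alphaS alpha J - alphaS alpha J'| <= 2%:R * theta - 1.

(* Call an index big when alpha_i > 2 theta - 1.  Small weights can be added to
   a set one at a time until its mass enters a window of width 2 theta - 1: the
   last one added overshoots the lower end by at most 2 theta - 1.  Placing the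
   big indices first and filling up with small ones thus yields a set S with
   3 - 4 theta <= alpha_S <= 2 - 2 theta (its complement is the I of (II^maj)),
   and S is then split into two halves whose masses differ by at most
   2 theta - 1; for (II^min) a single half of {1..k} is filled.  Each case then
   reduces to placing the few big indices, which is linear arithmetic.  For
   (iv), any split into two pairs of the four indices other than a lightest one
   works.  For (v) and (vi), summing alpha_i + alpha_(i+1) around the cycle of
   indices shows 2 < k b as soon as every pair sum is below b. *)

From mathcomp Require Import all_boot all_order all_algebra.
From mathcomp Require Import ring lra.
Set Implicit Arguments.
Unset Strict Implicit.
Unset Printing Implicit Defensive.

Import Order.TTheory GRing.Theory Num.Theory.
Local Open Scope ring_scope.

Lemma subset_sum_between (R : realDomainType) (T : finType) (f : T -> R)
    (c L : R) (A : {set T}) :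
  0 <= c -> (forall i, i \in A -> 0 <= f i <= c) ->
  0 <= L <= \sum_(i in A) f i ->
  exists2 B : {set T}, B \subset A & L <= \sum_(i in B) f i <= L + c.
Proof.
move=> c0; have [n] := ubnP #|A|; elim: n A => // n IH A.
have [-> _ _ | [x xA]] := set_0Vmem A.
  rewrite big_set0 => /andP[L0 L0'].
  by exists set0; rewrite ?sub0set // big_set0; apply/andP; split; lra.
rewrite (cardsD1 x) xA ltnS => cardA fA /andP[L0 LA].
have fAx i : i \in A :\ x -> 0 <= f i <= c by move=> /setD1P[_ /fA].
have [LAx | AxL] := lerP L (\sum_(i in A :\ x) f i).
  have [|B BAx LB] := IH _ cardA fAx; first by rewrite L0 LAx.
  by exists B => //; apply: subset_trans BAx (subD1set A x).
have /andP[_ fx_le] := fA x xA.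
by exists A; rewrite // (big_setD1 x xA) /= in LA *; apply/andP; split; lra.
Qed.

Lemma exists_subset_card (T : finType) (S : {set T}) n :
  (n <= #|S|)%N -> exists2 J : {set T}, J \subset S & #|J| = n.
Proof.
elim: n => [|n IH] n_le; first by exists set0; rewrite ?sub0set ?cards0.
have [J JS cardJ] := IH (ltnW n_le).
have /card_gt0P [x /setDP [xS xJ]] : (0 < #|S :\: J|)%N.
  by rewrite cardsD (setIidPr JS) cardJ subn_gt0.
by exists (x |: J); rewrite ?subUset ?sub1set ?xS // cardsU1 xJ cardJ.
Qed.

Section Weights.

Variables (R : realFieldType) (k : nat) (alpha : 'I_k -> R).
Hypothesis alpha_ge0 : forall i, 0 <= alpha i.
Hypothesis alpha_sum1 : \sum_(i < k) alpha i = 1.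

Lemma alphaS_ge0 (A : {set 'I_k}) : 0 <= alphaS alpha A.
Proof. exact: sumr_ge0. Qed.

Lemma alphaS_set0 : alphaS alpha set0 = 0.
Proof. exact: big_set0. Qed.

Lemma alphaS_set1 i : alphaS alpha [set i] = alpha i.
Proof. exact: big_set1. Qed.

Lemma alphaS_set2 i j : i != j -> alphaS alpha [set i; j] = alpha i + alpha j.
Proof. by move=> ij; rewrite /alphaS big_setU1 ?big_set1 // in_set1. Qed.

Lemma alphaS_setU (A B : {set 'I_k}) :
  [disjoint A & B] -> alphaS alpha (A :|: B) = alphaS alpha A + alphaS alpha B.
Proof. by move=> AB; rewrite /alphaS -bigU //; apply: eq_bigl => i; rewrite !inE. Qed.

Lemma alphaS_setD (A B : {set 'I_k}) :
  B \subset A -> alphaS alpha (A :\: B) = alphaS alpha A - alphaS alpha B.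
Proof.
by move=> BA; rewrite [in RHS]/alphaS (big_setID B) /= (setIidPr BA) addrC addrK.
Qed.

Lemma alphaS_setT : alphaS alpha setT = 1.
Proof. by rewrite /alphaS -alpha_sum1; apply: eq_bigl => i; rewrite inE. Qed.

Lemma alphaS_setC (A : {set 'I_k}) : alphaS alpha (~: A) = 1 - alphaS alpha A.
Proof. by rewrite -setTD alphaS_setD ?subsetT // alphaS_setT. Qed.

Lemma condI_or_lt theta : condI alpha theta \/ forall i, alpha i < 1 - theta.
Proof.
have [i le_i | lt] := pickP (fun i => 1 - theta <= alpha i); first by left; exists i.
by right => j; rewrite ltNge lt.
Qed.

Lemma big_outside_or_small c (A : {set 'I_k}) :
  (exists2 x, x \notin A & c < alpha x) \/ (forall i, i \notin A -> alpha i <= c).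
Proof.
have [x /andP[xA big_x] | small] := pickP (fun i => (i \notin A) && (c < alpha i)).
  by left; exists x.
by right => i iA; have := small i; rewrite iA /= => /negbT; rewrite -leNgt.
Qed.

Lemma pair_ge_or_lt b :
  (exists i j : 'I_k, (i < j)%N /\ b <= alphaS alpha [set i; j]) \/
  (forall i j, i != j -> alpha i + alpha j < b).
Proof.
have [[i j] /andP[ij le_b] | lt] :=
  pickP (fun p : 'I_k * 'I_k => (p.1 < p.2)%N && (b <= alphaS alpha [set p.1; p.2])).
  by left; exists i, j.
have lt_ord (i j : 'I_k) : (i < j)%N -> alpha i + alpha j < b.
  move=> ij; have := lt (i, j); rewrite /= ij /= alphaS_set2 ?(negbT (ltn_eqF ij)) //.
  by rewrite ltNge => ->.
by right=> i j; rewrite neq_ltn => /orP[/lt_ord // | /lt_ord]; rewrite addrC.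
Qed.

Lemma total_lt_of_pair_lt b : (1 < k)%N ->
  (forall i j, i != j -> alpha i + alpha j < b) -> 2%:R < k%:R * b.
Proof.
move=> k_gt1 pair_lt.
have ordS_neq (i : 'I_k) : ordS i != i.
  apply/eqP => /(congr1 val) /=; have [i1k | ] := ltnP i.+1 k.
    by rewrite modn_small // => /eqP; rewrite gtn_eqF.
  move=> ki; have -> : i.+1 = k by apply/eqP; rewrite eqn_leq ki ltn_ord.
  by rewrite modnn => i0; move: ki; rewrite -i0 leqNgt k_gt1.
have sum2 : \sum_(i < k) (alpha i + alpha (ordS i)) = 2%:R.
  have shift : \sum_(i < k) alpha (ordS i) = \sum_(i < k) alpha i.
    by rewrite [RHS](reindex_inj (@ordS_inj k)).
  by rewrite big_split /= shift alpha_sum1.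
have sumb : \sum_(i < k) b = k%:R * b by rewrite sumr_const card_ord mulr_natl.
rewrite -sum2 -sumb ltr_sum // => [|i _]; last by rewrite pair_lt // eq_sym.
by apply/hasP; exists (Ordinal k_gt1); rewrite ?mem_index_enum.
Qed.

Lemma exists_pair_ge b : (1 < k)%N -> k%:R * b <= 2%:R ->
  exists i j : 'I_k, (i < j)%N /\ b <= alphaS alpha [set i; j].
Proof.
move=> k_gt1 kb; have [// | pair_lt] := pair_ge_or_lt b.
by have := total_lt_of_pair_lt k_gt1 pair_lt; rewrite ltNge kb.
Qed.

Lemma condIImaj_of_subset theta (S J : {set 'I_k}) : J \subset S ->
  3%:R - 4%:R * theta <= alphaS alpha S <= 2%:R - 2%:R * theta ->
  `|2%:R * alphaS alpha J - alphaS alpha S| <= 2%:R * theta - 1 ->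
  condIImaj alpha theta.
Proof.
move=> JS /andP[S_lo S_hi] J_half.
exists (~: S), J, (S :\: J); split.
  split.
  - by rewrite disjoints_subset setCS.
  - by rewrite disjoints_subset setCS subsetDl.
  - by rewrite disjoint_sym disjoints_subset setDE subsetIr.
  - by rewrite -setUA -{1}(setIidPr JS) setID setUC setUCr.
rewrite alphaS_setC alphaS_setD //; split; [lra | split; [lra |]].
suff -> : alphaS alpha J - (alphaS alpha S - alphaS alpha J) =
  2%:R * alphaS alpha J - alphaS alpha S by [].
ring.
Qed.

Lemma condIImin_of_half theta (J : {set 'I_k}) :
  `|2%:R * alphaS alpha J - 1| <= 2%:R * theta - 1 -> condIImin alpha theta.
Proof.
move=> J_half; exists J, (~: J); split; first by rewrite disjoints_subset setCK.
split; first exact: setUCr.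
rewrite alphaS_setC; suff -> : alphaS alpha J - (1 - alphaS alpha J) =
  2%:R * alphaS alpha J - 1 by [].
ring.
Qed.

Lemma balanced_subset c (S J0 J1 : {set 'I_k}) : 0 <= c ->
  [disjoint J0 & J1] -> J0 :|: J1 \subset S ->
  (forall i, i \in S :\: (J0 :|: J1) -> alpha i <= c) ->
  2%:R * alphaS alpha J0 <= alphaS alpha S + c ->
  2%:R * alphaS alpha J1 <= alphaS alpha S + c ->
  exists2 J : {set 'I_k}, J \subset S & `|2%:R * alphaS alpha J - alphaS alpha S| <= c.
Proof.
move=> c0 J01 JS small J0_le J1_le.
have J0S : J0 \subset S by apply: subset_trans JS; apply: subsetUl.
have [J0_ge | J0_lt] := lerP (alphaS alpha S - c) (2%:R * alphaS alpha J0).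
  by exists J0; rewrite // ler_norml; apply/andP; split; lra.
set T := S :\: (J0 :|: J1).
have alphaT : alphaS alpha T = alphaS alpha S - alphaS alpha J0 - alphaS alpha J1.
  by rewrite alphaS_setD // alphaS_setU // opprD addrA.
have [U UT /andP[U_lo U_hi]] : exists2 U : {set 'I_k}, U \subset T &
    (alphaS alpha S - c) / 2%:R - alphaS alpha J0 <= alphaS alpha U <=
    (alphaS alpha S - c) / 2%:R - alphaS alpha J0 + c.
  apply: subset_sum_between => // [i /small -> | ]; first by rewrite alpha_ge0.
  by rewrite -/(alphaS alpha T) alphaT; apply/andP; split; lra.
have J0U : [disjoint J0 & U].
  rewrite disjoint_sym disjoints_subset; apply: subset_trans UT _.
  by rewrite /T setDE setCU setIA subIset // subsetIr.
exists (J0 :|: U).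
  by rewrite subUset J0S (subset_trans UT) ?subsetDl.
by rewrite alphaS_setU // ler_norml; apply/andP; split; lra.
Qed.

Lemma condIImaj_of_small_rest theta (J0 J1 : {set 'I_k}) : 1 / 2%:R <= theta ->
  [disjoint J0 & J1] ->
  (forall i, i \notin J0 :|: J1 -> alpha i <= 2%:R * theta - 1) ->
  alphaS alpha J0 + alphaS alpha J1 <= 3%:R - 4%:R * theta ->
  alphaS alpha J0 <= 1 - theta -> alphaS alpha J1 <= 1 - theta ->
  condIImaj alpha theta.
Proof.
move=> theta_ge J01 small K_le J0_le J1_le.
set K := J0 :|: J1.
have alphaK : alphaS alpha K = alphaS alpha J0 + alphaS alpha J1 by exact: alphaS_setU.
have [T TK /andP[T_lo T_hi]] : exists2 T : {set 'I_k}, T \subset ~: K &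
    3%:R - 4%:R * theta - alphaS alpha K <= alphaS alpha T <=
    3%:R - 4%:R * theta - alphaS alpha K + (2%:R * theta - 1).
  apply: subset_sum_between => [| i | ]; first lra.
    by rewrite inE alpha_ge0 => /small.
  by rewrite -/(alphaS alpha (~: K)) alphaS_setC; apply/andP; split; lra.
have KT : [disjoint K & T] by rewrite disjoint_sym disjoints_subset.
have alphaKT : alphaS alpha (K :|: T) = alphaS alpha K + alphaS alpha T.
  exact: alphaS_setU.
have [J JS] : exists2 J : {set 'I_k}, J \subset K :|: T &
    `|2%:R * alphaS alpha J - alphaS alpha (K :|: T)| <= 2%:R * theta - 1.
  apply: (balanced_subset (J0 := J0) (J1 := J1)) => //.
  - lra.
  - exact: subsetUl.
  - by move=> i /setDP[_ /small].
  - rewrite alphaKT; lra.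
  - rewrite alphaKT; lra.
move=> J_half; apply: (condIImaj_of_subset JS _ J_half).
by rewrite alphaKT; apply/andP; split; lra.
Qed.

Lemma condIImin_of_small_rest theta (J0 : {set 'I_k}) : 1 / 2%:R <= theta ->
  (forall i, i \notin J0 -> alpha i <= 2%:R * theta - 1) ->
  alphaS alpha J0 <= 1 - theta -> condIImin alpha theta.
Proof.
move=> theta_ge small J0_le.
have [J _] : exists2 J : {set 'I_k}, J \subset setT &
    `|2%:R * alphaS alpha J - alphaS alpha setT| <= 2%:R * theta - 1.
  apply: (balanced_subset (J0 := J0) (J1 := set0)).
  - lra.
  - by rewrite -setI_eq0 setI0.
  - exact: subsetT.
  - by move=> i; rewrite setU0 => /setDP[_ /small].
  - rewrite alphaS_setT; lra.
  - rewrite alphaS_set0 alphaS_setT; lra.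
by rewrite alphaS_setT => /condIImin_of_half.
Qed.

Lemma condIImaj_of_small_outside theta (J0 : {set 'I_k}) : 1 / 2%:R <= theta ->
  (forall i, i \notin J0 -> alpha i <= 2%:R * theta - 1) ->
  alphaS alpha J0 <= 1 - theta -> alphaS alpha J0 <= 3%:R - 4%:R * theta ->
  condIImaj alpha theta.
Proof.
move=> theta_ge small J0_le1 J0_le3.
apply: (condIImaj_of_small_rest (J0 := J0) (J1 := set0)); rewrite ?setU0 ?alphaS_set0 ?addr0 //.
- by rewrite -setI_eq0 setI0.
- by have := alphaS_ge0 J0; lra.
Qed.

Lemma condI_or_condIImaj theta : 5%:R / 8%:R <= theta -> theta <= 2%:R / 3%:R ->
  condI alpha theta \/ condIImaj alpha theta.
Proof.
move=> theta_lo theta_hi.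
have [|lt1] := condI_or_lt theta; [by left | right].
have [[x1 _ big1] | small0] := big_outside_or_small (2%:R * theta - 1) set0; last first.
  by apply: (condIImaj_of_small_outside _ small0); rewrite ?alphaS_set0; lra.
have [[x2 x2_new big2] | small1] := big_outside_or_small (2%:R * theta - 1) [set x1]; last first.
  by apply: (condIImaj_of_small_outside _ small1); rewrite ?alphaS_set1; have := lt1 x1; lra.
have x12 : x1 != x2 by rewrite eq_sym -in_set1.
have lt_x1 := lt1 x1; have lt_x2 := lt1 x2.
apply: (condIImaj_of_subset (subsetUl [set x1] [set x2])).
  by rewrite alphaS_set2 //; apply/andP; split; lra.
by rewrite alphaS_set1 alphaS_set2 // ler_norml; apply/andP; split; lra.
Qed.

Lemma condI_condI2_or_condIImin theta : 3%:R / 5%:R <= theta -> theta <= 1 ->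
  condI alpha theta \/ condI2 alpha theta \/ condIImin alpha theta.
Proof.
move=> theta_lo theta_le1.
have [|lt1] := condI_or_lt theta; [by left | right].
have [|lt2] := pair_ge_or_lt (3%:R / 2%:R * (1 - theta)); [by left | right].
have [[x1 _ big1] | small0] := big_outside_or_small (2%:R * theta - 1) set0; last first.
  by apply: (condIImin_of_small_rest _ small0); rewrite ?alphaS_set0; lra.
have [[x2 x2_new big2] | small1] := big_outside_or_small (2%:R * theta - 1) [set x1]; last first.
  by apply: (condIImin_of_small_rest _ small1); rewrite ?alphaS_set1; have := lt1 x1; lra.
have x12 : x1 != x2 by rewrite eq_sym -in_set1.
have lt12 := lt2 _ _ x12.
apply: (@condIImin_of_half _ [set x1; x2]); rewrite alphaS_set2 // ler_norml.
by apply/andP; split; lra.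
Qed.

Lemma condI_condI2maj_or_condIImaj theta :
  7%:R / 12%:R <= theta -> theta <= 3%:R / 5%:R ->
  condI alpha theta \/ condI2maj alpha theta \/ condIImaj alpha theta.
Proof.
move=> theta_lo theta_hi.
have [|lt1] := condI_or_lt theta; [by left | right].
have [|lt2] := pair_ge_or_lt (1 - theta); [by left | right].
have [[x1 _ big1] | small0] := big_outside_or_small (2%:R * theta - 1) set0; last first.
  by apply: (condIImaj_of_small_outside _ small0); rewrite ?alphaS_set0; lra.
have [[x2 x2_new big2] | small1] := big_outside_or_small (2%:R * theta - 1) [set x1]; last first.
  by apply: (condIImaj_of_small_outside _ small1); rewrite ?alphaS_set1; have := lt1 x1; lra.
have x12 : x1 != x2 by rewrite eq_sym -in_set1.
have lt12 := lt2 _ _ x12.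
have [[x3 x3_new big3] | small2] := big_outside_or_small (2%:R * theta - 1) [set x1; x2]; last first.
  apply: (condIImaj_of_small_rest _ _ small2); rewrite ?disjoints1 ?in_set1 ?alphaS_set1 //;
    by have := lt1 x1; have := lt1 x2; lra.
have /andP[x31 x32] : (x3 != x1) && (x3 != x2) by rewrite -negb_or -!in_set1 -in_setU.
have lt13 := lt2 _ _ x31; have lt23 := lt2 _ _ x32; have lt3 := lt1 x3.
have [[x4 x4_new big4] | small3] := big_outside_or_small (2%:R * theta - 1) [set x1; x2; x3]; last first.
  apply: (condIImaj_of_small_rest _ _ small3); rewrite ?alphaS_set1 ?alphaS_set2 //;
    by [rewrite disjoint_sym disjoints1 | lra].
move: x4_new; rewrite !inE !negb_or => /andP[/andP[x41 x42] x43].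
have x34 : x3 != x4 by rewrite eq_sym.
have lt34 := lt2 _ _ x34.
have alpha4 : alphaS alpha [set x1; x2; x3; x4] =
    alpha x1 + alpha x2 + (alpha x3 + alpha x4).
  rewrite alphaS_setU; last by rewrite disjoint_sym disjoints1 !inE !negb_or x41 x42.
  rewrite alphaS_setU; last by rewrite disjoint_sym disjoints1 !inE negb_or x31.
  by rewrite alphaS_set2 // !alphaS_set1 addrA.
apply: (@condIImaj_of_subset _ [set x1; x2; x3; x4] [set x1; x2]).
- by rewrite -setUA subsetUl.
- by rewrite alpha4; apply/andP; split; lra.
- by rewrite alpha4 alphaS_set2 // ler_norml; apply/andP; split; lra.
Qed.

Lemma condI2maj_or_condIImaj theta : k = 5%N -> 11%:R / 20%:R <= theta ->
  condI2maj alpha theta \/ condIImaj alpha theta.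
Proof.
move=> k5 theta_lo.
have [|lt2] := pair_ge_or_lt (1 - theta); [by left | right].
have /card_gt0P [i0 _] : (0 < #|'I_k|)%N by rewrite card_ord k5.
have [m _ m_min] := arg_minP alpha (isT : xpredT i0).
have m_le : 5%:R * alpha m <= 1.
  have -> : 5%:R * alpha m = \sum_(i < k) alpha m.
    by rewrite sumr_const card_ord k5 mulr_natl.
  by rewrite -alpha_sum1; apply: ler_sum => i _; apply: m_min.
set S := [set~ m].
have cardS : #|S| = 4 by rewrite cardsC1 card_ord k5.
have [J JS cardJ] : exists2 J : {set 'I_k}, J \subset S & #|J| = 2.
  by apply: exists_subset_card; rewrite cardS.
have /cards2P [p [q [pq defJ]]] : #|J| == 2 by rewrite cardJ.
have /cards2P [r [s [rs defJ']]] : #|S :\: J| == 2.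
  by rewrite cardsD (setIidPr JS) cardS cardJ.
have alphaS_S : alphaS alpha S = 1 - alpha m by rewrite alphaS_setC alphaS_set1.
have alphaS_J' := alphaS_setD JS.
rewrite defJ' alphaS_S defJ !alphaS_set2 // in alphaS_J'.
have ltpq := lt2 _ _ pq; have ltrs := lt2 _ _ rs.
apply: (condIImaj_of_subset JS).
  by rewrite alphaS_S; apply/andP; split; lra.
by rewrite alphaS_S defJ alphaS_set2 // ler_norml; apply/andP; split; lra.
Qed.

End Weights.

Theorem lemma2p20 (R : realFieldType) (k : nat) (alpha : 'I_k -> R) (theta : R) :
  (forall i, 0 <= alpha i) -> \sum_(i < k) alpha i = 1 ->
  1 / 3%:R <= theta -> theta <= 1 ->
  (theta = 5%:R / 8%:R ->
         condI alpha theta \/ condIImaj alpha theta) /\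
      (3%:R / 5%:R <= theta ->
         condI alpha theta \/ condI2 alpha theta \/ condIImin alpha theta) /\
      (theta = 7%:R / 12%:R ->
         condI alpha theta \/ condI2maj alpha theta \/ condIImaj alpha theta) /\
      (k = 5%N -> theta = 11%:R / 20%:R ->
         condI2maj alpha theta \/ condIImaj alpha theta) /\
      ((k = 3%N \/ k = 4%N) -> 1 / 2%:R <= theta -> condI2maj alpha theta) /\
      (((k = 3%N /\ 5%:R / 9%:R <= theta) \/ (k = 2%N /\ 1 / 3%:R <= theta)) ->
         condI2 alpha theta).
Proof.
move=> alpha_ge0 alpha_sum1 theta_lo theta_hi.
split; first by move=> theta_eq; apply: condI_or_condIImaj; rewrite // theta_eq; lra.
split; first by move=> theta_ge; apply: condI_condI2_or_condIImin.
split; first by move=> theta_eq; apply: condI_condI2maj_or_condIImaj; rewrite // theta_eq; lra.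
split; first by move=> k5 theta_eq; apply: condI2maj_or_condIImaj; rewrite // theta_eq; lra.
split.
  by move=> k34 theta_ge; apply: exists_pair_ge => //; case: k34 => ->; rewrite //; lra.
by move=> k23; apply: exists_pair_ge => //; case: k23 => -[-> theta_ge]; rewrite //; lra.
Qed.
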